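(* Let $\mathcal{A}$ be the ring of adeles of $\mathbb{Q}$ with $\mathbb{Q}^*$ acting by multiplication through the diagonal embedding. If $a\in\mathcal{A}$ is not invertible, then $$\overline{\mathbb{Q}^*a}=\{b\in\mathcal{A}: \text{for every } p\in\mathcal{P}\cup\{\infty\},\ a_p=0\implies b_p=0\}.$$
   Context: $\mathcal{P}$ is the set of primes. $\mathcal{A}=\mathcal{A}_f\times\mathbb{R}$, where $\mathcal{A}_f=\{(a_p)\in\prod_{p\in\mathcal{P}}\mathbb{Q}_p: a_p\in\mathbb{Z}_p\text{ for almost all }p\}$ with the restricted product topology; $\mathcal{A}$ has the product topology and componentwise operations, $\mathbb{Q}$ embedded diagonally. For $a\in\mathcal{A}$ write $a=((a_p)_{p\in\mathcal{P}},a_\infty)$. An adele is invertible iff all $a_p\ne0$, $a_\infty\ne0$ and $a_p\in\mathbb{Z}_p^*$ for almost all $p$. *)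

From HB Require Import structures.
From mathcomp Require Import all_boot all_order all_algebra.
From mathcomp Require Import all_classical all_reals.
From mathcomp Require Import topology normedtype.
Set Implicit Arguments. Unset Strict Implicit. Unset Printing Implicit Defensive.
Import Order.TTheory GRing.Theory Num.Theory.
Import numFieldNormedType.Exports.
Local Open Scope ring_scope.
Local Open Scope classical_set_scope.

Definition primeT := {p : nat | prime p}.

Definition padic_val (p : nat) (q : rat) : int :=
  (logn p `|numq q|%N)%:Z - (logn p `|denq q|%N)%:Z.
Definition padic_abs (p : nat) (q : rat) : rat :=
  if q == 0 then 0 else (p%:Q) ^ (- padic_val p q).

(** A model of Q_p: a field with an embedding of Q and an absolute value
    extending |.|_p, complete, in which Q is dense.  This is the defining
    (universal) property of the completion Q_p of Q w.r.t. |.|_p; any two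
    such models are uniquely isometrically isomorphic. *)
Record padic_field (p : nat) := PadicField {
  pf_car : fieldType;
  pf_abs : pf_car -> rat;
  pf_emb : {rmorphism rat -> pf_car};
  pf_abs_ge0 : forall x, 0 <= pf_abs x;
  pf_abs_eq0 : forall x, pf_abs x = 0 <-> x = 0;
  pf_absM : forall x y, pf_abs (x * y) = pf_abs x * pf_abs y;
  pf_absD : forall x y, pf_abs (x + y) <= Num.max (pf_abs x) (pf_abs y);
  pf_abs_emb : forall q, pf_abs (pf_emb q) = padic_abs p q;
  pf_dense : forall (x : pf_car) (e : rat), 0 < e ->
     exists q : rat, pf_abs (x - pf_emb q) < e;
  pf_complete : forall u : nat -> pf_car,
     (forall e : rat, 0 < e -> exists N, forall m n, (N <= m)%N -> (N <= n)%N ->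
         pf_abs (u m - u n) < e) ->
     exists l, forall e : rat, 0 < e -> exists N, forall n, (N <= n)%N ->
         pf_abs (u n - l) < e
}.

Arguments pf_car {p}.
Arguments pf_abs {p}.
Arguments pf_emb {p}.

Definition padic_open (p : nat) (K : padic_field p) (U : set (pf_car K)) :=
  forall x, U x -> exists e : rat, 0 < e /\
    forall y, pf_abs K (y - x) < e -> U y.

Section Adeles.
Variables (Qp : forall P : primeT, padic_field (val P)) (R : realType).

Definition adele_t := ((forall P : primeT, pf_car (Qp P)) * R)%type.

Definition is_adele (a : adele_t) : Prop :=
  exists N : nat, forall P : primeT, (N <= val P)%N -> pf_abs (Qp P) (a.1 P) <= 1.

Definition adele_invertible (a : adele_t) : Prop :=
  exists b : adele_t, is_adele b /\
    (forall P, a.1 P * b.1 P = 1) /\ a.2 * b.2 = 1.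

Definition adele_qmul (q : rat) (a : adele_t) : adele_t :=
  (fun P => pf_emb (Qp P) q * a.1 P, ratr q * a.2).

Definition adele_basic (S : seq primeT) (Uinf : set R)
  (Up : forall P, set (pf_car (Qp P))) (c : adele_t) : Prop :=
  Uinf c.2 /\ forall P, if P \in S then Up P (c.1 P)
                        else pf_abs (Qp P) (c.1 P) <= 1.

Definition adele_open (U : set adele_t) : Prop :=
  forall b, is_adele b -> U b ->
    exists (S : seq primeT) (Uinf : set R) (Up : forall P, set (pf_car (Qp P))),
      open Uinf /\ (forall P, P \in S -> padic_open (Up P)) /\
      adele_basic S Uinf Up b /\
      (forall c, is_adele c -> adele_basic S Uinf Up c -> U c).

Definition adele_closure (X : set adele_t) (b : adele_t) : Prop :=
  is_adele b /\ forall U, adele_open U -> U b ->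
    exists c, is_adele c /\ X c /\ U c.

Definition Qstar_orbit (a : adele_t) : set adele_t :=
  fun c => exists q : rat, q != 0 /\ c = adele_qmul q a.

End Adeles.

(* The inclusion from left to right holds because the conditions [a_p = 0 ->
   b_p = 0] define a closed set containing the orbit.  Conversely, a basic
   neighbourhood of [b] constrains finitely many places [S] and [oo]: we need
   [q] in Q^* with [q a_p] close to [b_p] for [p] in [S], [q a_p] in Z_p at the
   other primes, and [q a_oo] close to [b_oo].  At the finite places, Bezout and
   the Chinese remainder theorem give [q = z / (E D)] for a whole residue class
   [z = z0 (mod M)], as soon as [D] is prime to the constrained primes and
   [|a_p| <= |D|_p] at the primes dividing [D].  Such a [D] can be taken
   arbitrarily large because [a] is not invertible: either some
   [a_p = 0], or [|a_p| < 1] for infinitely many [p].  Finally [z] is chosen in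
   its residue class near [E D b_oo / a_oo]. *)

From HB Require Import structures.
From mathcomp Require Import all_boot all_order all_algebra.
From mathcomp Require Import all_classical all_reals.
From mathcomp Require Import topology normedtype.
From mathcomp Require Import ring lra.
Import Order.TTheory GRing.Theory Num.Theory.
Import numFieldNormedType.Exports.
Set Implicit Arguments. Unset Strict Implicit. Unset Printing Implicit Defensive.
Local Open Scope ring_scope.
Local Open Scope classical_set_scope.

Section PadicAbsRat.
Variables (p : nat) (K : padic_field p).
Hypothesis p_prime : prime p.
Local Notation "`| x |_p" := (padic_abs p x) (format "`| x |_p").

Lemma prime_ratr_gt0 : 0 < p%:R :> rat.
Proof. by rewrite ltr0n prime_gt0. Qed.

(* Multiplicativity and the ultrametric inequality on Q are inherited from
   the model [K] of Q_p, through the isometric embedding of Q. *)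
Lemma padic_absM x y : `|x * y|_p = `|x|_p * `|y|_p.
Proof. by rewrite -!(pf_abs_emb K) rmorphM pf_absM. Qed.

Lemma padic_absD x y : `|x + y|_p <= Num.max `|x|_p `|y|_p.
Proof. by rewrite -!(pf_abs_emb K) rmorphD pf_absD. Qed.

Lemma padic_abs_ge0 x : 0 <= `|x|_p.
Proof. by rewrite /padic_abs; case: eqP => // _; rewrite exprz_ge0 ?ler0n. Qed.

Lemma padic_abs0 : `|0|_p = 0.
Proof. by rewrite /padic_abs eqxx. Qed.

Lemma padic_abs_gt0 x : x != 0 -> 0 < `|x|_p.
Proof. by move=> x0; rewrite /padic_abs (negbTE x0) exprz_gt0 ?prime_ratr_gt0. Qed.

Lemma padic_abs1 : `|1|_p = 1.
Proof. by rewrite /padic_abs /padic_val oner_eq0 subrr expr0z. Qed.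

Lemma padic_absN x : `|- x|_p = `|x|_p.
Proof. by rewrite /padic_abs /padic_val oppr_eq0 numqN denqN abszN. Qed.

Lemma padic_absX x n : `|x ^+ n|_p = `|x|_p ^+ n.
Proof. by elim: n => [|n IH]; rewrite ?padic_abs1 // !exprS padic_absM IH. Qed.

Lemma padic_absV x : `|x^-1|_p = `|x|_p^-1.
Proof.
have [->|x0] := eqVneq x 0; first by rewrite !(invr0, padic_abs0).
apply: (mulfI (lt0r_neq0 (padic_abs_gt0 x0))).
by rewrite -padic_absM !divff ?padic_abs1 // lt0r_neq0 // padic_abs_gt0.
Qed.

Lemma padic_abs_nat_le1 n : `|n%:R|_p <= 1.
Proof.
elim: n => [|n IH]; first by rewrite padic_abs0.
by rewrite -addn1 natrD (le_trans (padic_absD _ _)) // ge_max IH padic_abs1.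
Qed.

Lemma padic_abs_int_le1 (z : int) : `|z%:~R|_p <= 1.
Proof. by case: z => n; rewrite ?NegzE ?mulrNz ?padic_absN padic_abs_nat_le1. Qed.

Lemma padic_abs_prime : `|p%:R|_p = p%:R^-1.
Proof.
rewrite /padic_abs /padic_val pnatr_eq0 gtn_eqF ?prime_gt0 //=.
rewrite -[p%:R]/((p%:Z)%:~R) numq_int denq_int logn_prime // eqxx.
by rewrite logn1 subr0 exprN1.
Qed.

Lemma padic_abs_int_coprime (z : int) : ~~ (p %| `|z|)%N -> `|z%:~R|_p = 1.
Proof.
move=> pNz; have z0 : z != 0 by apply: contraNneq pNz => ->.
rewrite /padic_abs /padic_val intr_eq0 (negbTE z0) numq_int denq_int logn1.
by rewrite logn_coprime ?subr0 ?expr0z // prime_coprime.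
Qed.

Lemma padic_abs_nat_coprime n : ~~ (p %| n)%N -> `|n%:R|_p = 1.
Proof. by move=> pNn; rewrite -[n%:R]/((n%:Z)%:~R) padic_abs_int_coprime. Qed.

Lemma padic_abs_dvd (z : int) k : ((p ^ k)%N %| z)%Z -> `|z%:~R|_p <= p%:R^-1 ^+ k.
Proof.
case/dvdzP=> c ->; rewrite intrM padic_absM -[leRHS]mul1r.
rewrite ler_pM ?padic_abs_ge0 ?padic_abs_int_le1 //.
by rewrite -[X in `|X|_p]/((p ^ k)%:R) natrX padic_absX padic_abs_prime exprVn.
Qed.

Lemma padic_abs_le1_denq s : `|s|_p <= 1 -> ~~ (p %| `|denq s|)%N.
Proof.
apply: contraTN => p_den.
have p_num : ~~ (p %| `|numq s|)%N.
  apply: contraL (coprime_num_den s) => p_num; apply/negP => /(coprime_dvdl p_num).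
  by rewrite prime_coprime // p_den.
have s0 : s != 0 by apply: contraNneq p_num => ->.
rewrite -ltNge /padic_abs (negbTE s0) /padic_val logn_coprime ?prime_coprime //.
rewrite sub0r opprK -exprnP exprn_egt1 ?ltr1n ?prime_gt1 // -lt0n.
by rewrite -(pfactor_dvdn 1) ?expn1 ?absz_gt0 ?denq_neq0.
Qed.

Lemma padic_abs_lt1 r : `|r|_p < 1 -> `|r|_p <= p%:R^-1.
Proof.
rewrite /padic_abs; case: eqP => _; first by rewrite invr_ge0 ler0n.
have p_gt1 : 1 < p%:R :> rat by rewrite ltr1n prime_gt1.
by rewrite -[X in _ < X](expr0z p%:R) -exprN1 ltr_eXz2l // ler_eXz2l // -ltzD1.
Qed.

(* With [u * denq s + v * p ^ n = 1] (Bezout), [r = numq s * u] works. *)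
Lemma padic_int_approx s n : `|s|_p <= 1 -> exists r : int, `|r%:~R - s|_p <= p%:R^-1 ^+ n.
Proof.
move=> /padic_abs_le1_denq p_den.
have : coprimez (denq s) (p ^ n)%N.
  by rewrite coprimezE absz_nat coprime_sym coprimeXl // prime_coprime.
case/coprimezP=> -[u v] /= Bezout; exists (numq s * u).
have den0 : (denq s)%:~R != 0 :> rat by rewrite intr_eq0 denq_neq0.
have -> : (numq s * u)%:~R - s = (- numq s * v * (p ^ n)%N)%:~R / (denq s)%:~R.
  have B : u%:~R * (denq s)%:~R + v%:~R * (p ^ n)%N%:~R = 1 :> rat.
    by rewrite -!intrM -intrD Bezout.
  apply: (mulIf den0); rewrite divfK // mulrBl -numqE.
  by rewrite -[X in _ - X]mulr1 -[X in _ - _ * X = _]B !(intrM, intrN); ring.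
rewrite padic_absM padic_absV (padic_abs_int_coprime p_den) invr1 mulr1.
by rewrite padic_abs_dvd // dvdz_mull.
Qed.

End PadicAbsRat.

Lemma ub_seq (T : eqType) (R : archiRealDomainType) (s : seq T) (f : T -> R) :
  exists K : nat, forall x, x \in s -> f x < K%:R.
Proof.
exists (\max_(x <- s) Num.bound `|f x|) => x xs.
apply: le_lt_trans (ler_norm _) _; apply: lt_le_trans (archi_boundP _) _ => //.
rewrite ler_nat; exact: (leq_bigmax_seq (F := fun x => Num.bound `|f x|)).
Qed.

Section FinitelyManyPrimes.
Variable Qp : forall P : primeT, padic_field (val P).
Local Notation "`| x |_ P" := (padic_abs (val P) x) (format "`| x |_ P").
Implicit Types (P Q : primeT) (L : seq primeT).

Lemma primeT_gt1 P : (1 < val P)%N. Proof. exact/prime_gt1/valP. Qed.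

Lemma dvdn_primeT P Q : (val P %| val Q)%N = (P == Q).
Proof. by rewrite dvdn_prime2 ?(valP P) ?(valP Q). Qed.

Definition prime_power_prod L n := (\prod_(Q <- L) val Q ^ n)%N.

Lemma prime_power_prod_gt0 L n : (0 < prime_power_prod L n)%N.
Proof.
by apply: prodn_gt0 => Q; rewrite expn_gt0 ltnW ?primeT_gt1.
Qed.

Lemma dvdn_prime_power_prod L n Q : Q \in L -> (val Q ^ n %| prime_power_prod L n)%N.
Proof. by move=> QL; rewrite /prime_power_prod (big_rem Q QL) dvdn_mulr. Qed.

Lemma ndvdn_prime_power_prod L n Q : Q \notin L -> ~~ (val Q %| prime_power_prod L n)%N.
Proof.
move=> QL; rewrite Euclid_dvd_prod ?(valP Q) // big_has.
apply/hasPn => R RL; rewrite Euclid_dvdX ?(valP Q) // dvdn_primeT.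
by apply: contraNN QL => /andP[/eqP-> _].
Qed.

Lemma padic_abs_prime_power_prod L n Q : uniq L ->
  `|(prime_power_prod L n)%:R|_Q = if Q \in L then (val Q)%:R^-1 ^+ n else 1.
Proof.
move=> uL; case: ifPn => QL; last first.
  by rewrite padic_abs_nat_coprime ?(valP Q) ?ndvdn_prime_power_prod.
rewrite /prime_power_prod (big_rem Q QL) natrM (padic_absM (Qp Q)) natrX.
rewrite (padic_absX (Qp Q)) padic_abs_prime ?(valP Q) // exprVn.
by rewrite padic_abs_nat_coprime ?(valP Q) ?ndvdn_prime_power_prod ?mem_rem_uniqF ?mulr1.
Qed.

Lemma chinese_seq L n (r : primeT -> int) : uniq L ->
  exists z : int, forall Q, Q \in L -> ((val Q ^ n)%N %| z - r Q)%Z.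
Proof.
elim: L => [|P L IH] /=; first by exists 0.
case/andP=> PL /IH [z hz].
have PLn : coprimez (val P ^ n)%N (prime_power_prod L n).
  by rewrite coprimezE !absz_nat coprimeXl // prime_coprime ?(valP P) ?ndvdn_prime_power_prod.
set y := zchinese (val P ^ n)%N (prime_power_prod L n) (r P) z.
exists y => Q; rewrite in_cons => /predU1P[->|QL].
  by rewrite -eqz_mod_dvd zchinese_modl.
have Ly : ((prime_power_prod L n)%:Z %| y - z)%Z by rewrite -eqz_mod_dvd zchinese_modr.
have QnL : ((val Q ^ n)%N %| (prime_power_prod L n)%:Z)%Z.
  by rewrite dvdzE !absz_nat dvdn_prime_power_prod.
by rewrite -(subrKA z) rpredD ?hz ?(dvdz_trans QnL).
Qed.

Lemma int_approx_seq L n (s : primeT -> rat) : uniq L ->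
  (forall Q, Q \in L -> `|s Q|_Q <= 1) ->
  exists z : int, forall Q, Q \in L -> `|z%:~R - s Q|_Q <= (val Q)%:R^-1 ^+ n.
Proof.
move=> uL s_le1.
have /choice[r hr] : forall Q, exists rQ : int, Q \in L ->
    `|rQ%:~R - s Q|_Q <= (val Q)%:R^-1 ^+ n.
  move=> Q; case QL: (Q \in L); last by exists 0.
  by have [rQ ?] := padic_int_approx (Qp Q) (valP Q) n (s_le1 Q QL); exists rQ.
have [z hz] := chinese_seq n r uL.
exists z => Q QL; rewrite -(subrKA (r Q)%:~R).
apply: le_trans (padic_absD (Qp Q) _ _) _; rewrite ge_max hr // andbT -intrB.
by apply: (padic_abs_dvd (Qp Q) (valP Q)); apply: hz.
Qed.

Lemma primeT_expn_ub L (f : primeT -> rat) :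
  exists K : nat, forall Q, Q \in L -> f Q < (val Q)%:R ^+ K.
Proof.
have [K fK] := ub_seq L f; exists K => Q QL.
by rewrite (lt_trans (fK Q QL)) // -natrX ltr_nat ltn_expl ?primeT_gt1.
Qed.

(* [E] clears the denominators of the targets [t Q] at the primes of [L],
   and [M] is fine enough that every [z = z0 (mod M)] still approximates. *)
Lemma rat_approx_seq L (t d : primeT -> rat) : uniq L ->
  (forall Q, Q \in L -> 0 < d Q) ->
  exists E M : nat, [/\ (0 < E)%N, (0 < M)%N &
  forall D : nat, (0 < D)%N -> (forall Q, Q \in L -> ~~ (val Q %| D)%N) ->
  exists z0 : int, forall k : int,
   (forall Q, Q \in L -> `|(z0 + M%:Z * k)%:~R / (E * D)%:R - t Q|_Q < d Q) /\
   (forall Q, Q \notin L -> `|(z0 + M%:Z * k)%:~R / (E * D)%:R * D%:R|_Q <= 1)].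
Proof.
move=> uL d_gt0.
have [K1 tK1] := primeT_expn_ub L (fun Q => `|t Q|_Q).
have [K2 dK2] := primeT_expn_ub L (fun Q => (d Q)^-1).
set E := prime_power_prod L K1; set M := prime_power_prod L (K1 + K2).
exists E, M; split; rewrite ?prime_power_prod_gt0 // => D D_gt0 LD.
have E0 : E%:R != 0 :> rat by rewrite pnatr_eq0 -lt0n prime_power_prod_gt0.
have D0 : D%:R != 0 :> rat by rewrite pnatr_eq0 -lt0n.
have absED Q : Q \in L -> `|(E * D)%:R|_Q = (val Q)%:R^-1 ^+ K1.
  move=> QL; rewrite natrM (padic_absM (Qp Q)) padic_abs_prime_power_prod // QL.
  by rewrite padic_abs_nat_coprime ?(valP Q) ?LD ?mulr1.
have [z0 z0_approx] : exists z0 : int, forall Q, Q \in L ->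
    `|z0%:~R - (E * D)%:R * t Q|_Q <= (val Q)%:R^-1 ^+ (K1 + K2).
  apply: int_approx_seq => // Q QL; rewrite (padic_absM (Qp Q)) absED // exprVn.
  by rewrite ler_pdivrMl ?exprn_gt0 ?prime_ratr_gt0 ?(valP Q) // mulr1 ltW ?tK1.
exists z0 => k; split => Q QL; last first.
  rewrite natrM invfM mulrA mulfVK // (padic_absM (Qp Q)) (padic_absV (Qp Q) (valP Q)).
  by rewrite padic_abs_prime_power_prod // (negbTE QL) invr1 mulr1 padic_abs_int_le1.
have Q_gt0 : 0 < (val Q)%:R :> rat by rewrite prime_ratr_gt0 ?(valP Q).
have ED0 : (E * D)%:R != 0 :> rat by rewrite natrM mulf_neq0.
have num_approx : `|(z0 + M%:Z * k)%:~R - (E * D)%:R * t Q|_Q <= (val Q)%:R^-1 ^+ (K1 + K2).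
  rewrite intrD addrAC; apply: le_trans (padic_absD (Qp Q) _ _) _.
  rewrite ge_max z0_approx // andTb.
  apply: (padic_abs_dvd (Qp Q) (valP Q)).
  by rewrite dvdz_mulr // dvdzE absz_nat dvdn_prime_power_prod.
rewrite -[_ / _ - _](mulfK ED0) mulrBl divfK // [t Q * _]mulrC.
rewrite (padic_absM (Qp Q)) (padic_absV (Qp Q) (valP Q)) absED //.
apply: le_lt_trans (ler_wpM2r _ num_approx) _.
  by rewrite invr_ge0 exprn_ge0 // invr_ge0 ltW.
rewrite exprD mulrC mulKf ?expf_neq0 ?invr_eq0 ?lt0r_neq0 // exprVn.
by rewrite -[ltRHS]invrK ltf_pV2 ?posrE ?invr_gt0 ?exprn_gt0 ?d_gt0 ?dK2.
Qed.

End FinitelyManyPrimes.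

(* Of the two consecutive terms of the progression around [y * n], at least
   one is nonzero. *)
Lemma arith_prog_approx (R : archiRealFieldType) (z0 : int) (M n : nat) (y : R) :
  (0 < M)%N -> (0 < n)%N ->
  exists k : int, z0 + M%:Z * k != 0 /\
    `|ratr ((z0 + M%:Z * k)%:~R / n%:R) - y| <= M%:R / n%:R.
Proof.
move=> M_gt0 n_gt0; have M_pos : 0 < M%:R :> R by rewrite ltr0n.
have n_pos : 0 < n%:R :> R by rewrite ltr0n.
set x := y * n%:R; set k0 := Num.floor ((x - z0%:~R) / M%:R).
have /andP[lo hi] := floor_itv ((x - z0%:~R) / M%:R).
rewrite -/k0 ler_pdivlMr // ltr_pdivrMr // intrD mulrDl mul1r in lo hi.
have near k : k = k0 \/ k = k0 + 1 -> `|(z0 + M%:Z * k)%:~R - x| <= M%:R.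
  rewrite ler_norml.
  by case=> ->; rewrite !(intrD, intrM) -[(M%:Z)%:~R]/(M%:R : R); apply/andP; split; lra.
have scale (z : int) : `|ratr (z%:~R / n%:R) - y| = `|z%:~R - x| / n%:R.
  rewrite fmorph_div rmorph_int rmorph_nat -[y in _ - y](mulfK (lt0r_neq0 n_pos)).
  by rewrite -mulrBl normrM normfV (gtr0_norm n_pos).
have [z_eq0|z_neq0] := eqVneq (z0 + M%:Z * k0) 0; last first.
  exists k0; split=> //; rewrite scale ler_pM2r ?invr_gt0 //.
  exact: near (or_introl erefl).
exists (k0 + 1); split; last first.
  by rewrite scale ler_pM2r ?invr_gt0 //; exact: near (or_intror erefl).
by rewrite mulrDr addrA z_eq0 add0r mulr1 eqz_nat -lt0n.
Qed.

Section PadicField.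
Variables (p : nat) (K : padic_field p).
Hypothesis p_prime : prime p.
Local Notation ab := (pf_abs K).
Local Notation emb := (pf_emb K).

Lemma pf_abs0 : ab 0 = 0.
Proof. exact/pf_abs_eq0. Qed.

Lemma pf_abs_gt0 x : x != 0 -> 0 < ab x.
Proof. by move=> x0; rewrite lt_def pf_abs_ge0 andbT; apply: contra_neq x0 => /pf_abs_eq0. Qed.

Lemma pf_abs1 : ab 1 = 1.
Proof. by rewrite -(rmorph1 emb) pf_abs_emb padic_abs1. Qed.

Lemma pf_absN x : ab (- x) = ab x.
Proof.
by rewrite -mulN1r pf_absM -(rmorphN1 emb) pf_abs_emb padic_absN padic_abs1 mul1r.
Qed.

Lemma pf_absB x y : ab (x - y) = ab (y - x).
Proof. by rewrite -pf_absN opprB. Qed.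

Lemma pf_absV x : ab x^-1 = (ab x)^-1.
Proof.
have [->|x0] := eqVneq x 0; first by rewrite invr0 pf_abs0 invr0.
apply: (mulfI (lt0r_neq0 (pf_abs_gt0 x0))).
by rewrite -pf_absM !divff ?pf_abs1 // lt0r_neq0 // pf_abs_gt0.
Qed.

Lemma pf_absD_small x y : ab y < ab x -> ab (x + y) = ab x.
Proof.
move=> yx; apply/eqP; rewrite eq_le; apply/andP; split.
  by apply: le_trans (pf_absD _ _) _; rewrite ge_max lexx ltW.
rewrite leNgt; apply/negP => lt_xy_x.
by have := pf_absD (x + y) (- y); rewrite addrK pf_absN leNgt gt_max lt_xy_x yx.
Qed.

Lemma pf_abs_emb_eq x : x != 0 -> exists r : rat, ab x = padic_abs p r.
Proof.
move=> x0; have [r xr] := pf_dense x (pf_abs_gt0 x0).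
by exists r; rewrite -(pf_abs_emb K) -[emb r](subKr x) pf_absD_small // pf_absN.
Qed.

(* The value group of [K] is that of Q, namely [p ^ Z]. *)
Lemma pf_abs_lt1 x : ab x < 1 -> ab x <= p%:R^-1.
Proof.
have [->|x0] := eqVneq x 0; first by rewrite pf_abs0 invr_ge0 ler0n.
by have [r ->] := pf_abs_emb_eq x0; exact: padic_abs_lt1.
Qed.

Lemma pf_abs_mul_approx x y (t q e : rat) : x != 0 ->
  ab (y / x - emb t) < e / ab x -> padic_abs p (q - t) < e / ab x ->
  ab (emb q * x - y) < e.
Proof.
move=> x0 yt qt; have x_gt0 := pf_abs_gt0 x0.
have -> : emb q * x - y = ((emb q - emb t) + (emb t - y / x)) * x.
  by rewrite addrA subrK mulrBl divfK.
rewrite pf_absM -ltr_pdivlMr //; apply: le_lt_trans (pf_absD _ _) _.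
by rewrite gt_max -rmorphB pf_abs_emb qt pf_absB yt.
Qed.

Lemma pf_abs_mul_le1 x (q : rat) (D : nat) :
  padic_abs p (q * D%:R) <= 1 -> ab x <= padic_abs p D%:R -> ab (emb q * x) <= 1.
Proof.
move=> qD xD; rewrite pf_absM pf_abs_emb (le_trans _ qD) // (padic_absM K).
by rewrite ler_wpM2l ?padic_abs_ge0.
Qed.

End PadicField.

Definition primes_below (N : nat) : seq primeT := pmap insub (iota 0 N).

Lemma mem_primes_below N P : (P \in primes_below N) = (val P < N)%N.
Proof. by rewrite mem_pmap_sub mem_iota. Qed.

Lemma uniq_primes_below N : uniq (primes_below N).
Proof. exact/pmap_sub_uniq/iota_uniq. Qed.

Lemma primeT_seq_ub (S : seq primeT) : exists N, forall P, P \in S -> (val P < N)%N.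
Proof.
have [N SN] := ub_seq S (fun P => (val P)%:R : rat).
by exists N => P /SN; rewrite ltr_nat.
Qed.

Section Adeles.
Variables (Qp : forall P : primeT, padic_field (val P)) (R : realType).
Local Notation adele := (adele_t Qp R).
Local Notation ab P := (pf_abs (Qp P)).
Local Notation emb P := (pf_emb (Qp P)).
Implicit Types (a b c : adele) (X : set adele) (S : seq primeT).

Definition finite_near S (e : primeT -> rat) b c : Prop :=
  forall P, if P \in S then ab P (c.1 P - b.1 P) < e P else ab P (c.1 P) <= 1.

Lemma padic_open_neq0 P : padic_open [set x : pf_car (Qp P) | x != 0].
Proof.
move=> x /= x0; exists (ab P x); split=> [|y]; first exact: pf_abs_gt0.
by apply: contraTneq => ->; rewrite sub0r pf_absN ltxx.
Qed.

Lemma adele_open_cylinder S (Uinf : set R) (Up : forall P, set (pf_car (Qp P))) :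
  open Uinf -> (forall P, P \in S -> padic_open (Up P)) ->
  adele_open (fun c : adele => Uinf c.2 /\ forall P, P \in S -> Up P (c.1 P)).
Proof.
move=> oUinf oUp b [N bN] [Uinf_b Up_b].
exists (S ++ primes_below N)%SEQ, Uinf, (fun P => if P \in S then Up P else setT).
split=> //; split=> [P _|]; first by case: ifPn => [/oUp //|_ x _]; exists 1.
split=> [|c _ [Uinf_c Up_c]]; last first.
  by split=> // P PS; have := Up_c P; rewrite mem_cat PS.
split=> // P; rewrite mem_cat; have [PS|PS] := boolP (P \in S); first exact: Up_b.
by rewrite /= mem_primes_below; case: ltnP => // /bN.
Qed.

Lemma adele_closure_finite_eq0 X b P :
  (forall c, X c -> c.1 P = 0) -> adele_closure X b -> b.1 P = 0.
Proof.
move=> XP [_ clX]; apply/eqP/negPn/negP => bP.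
have U_open := adele_open_cylinder (S := [:: P]) openT (fun P' _ => padic_open_neq0 (P := P')).
have Ub : setT b.2 /\ forall P', P' \in [:: P] -> b.1 P' != 0.
  by split=> // P'; rewrite inE => /eqP->.
have [c [_ [/XP cP [_ Uc]]]] := clX _ U_open Ub.
by have /= := Uc P (mem_head _ _); rewrite cP eqxx.
Qed.

Lemma adele_closure_real_eq0 X b :
  (forall c, X c -> c.2 = 0) -> adele_closure X b -> b.2 = 0.
Proof.
move=> X0 [_ clX]; apply/eqP/negPn/negP => b0.
have U_open := adele_open_cylinder (S := [::]) (Up := fun P => setT) (@open_neq R 0)
  (fun _ => ltac:(by [])).
have [c [_ [/X0 c0 [Uc _]]]] := clX _ U_open (conj b0 (fun _ _ => I)).
by move: Uc; rewrite /= c0 eqxx.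
Qed.

Lemma adele_closure_approx X b : is_adele b ->
  (forall S (eps : R) (e : primeT -> rat), 0 < eps -> (forall P, 0 < e P) ->
    exists2 c, X c & `|b.2 - c.2| < eps /\ finite_near S e b c) ->
  adele_closure X b.
Proof.
move=> adb approx; split=> // U oU Ub.
have [S [Uinf [Up [oUinf [oUp [[Uinf_b Up_b] basicU]]]]]] := oU b adb Ub.
have [eps eps_gt0 epsU] : exists2 eps : R, 0 < eps & forall y, `|b.2 - y| < eps -> Uinf y.
  have /nbhs_ballP[eps eps_gt0 epsU] : nbhs b.2 Uinf by apply: open_nbhs_nbhs.
  by exists eps => // y /epsU.
have /choice[e eP] : forall P, exists e : rat,
    0 < e /\ (P \in S -> forall y, ab P (y - b.1 P) < e -> Up P y).
  move=> P; case: (boolP (P \in S)) => [PS|_]; last by exists 1.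
  have := Up_b P; rewrite PS => /(oUp P PS)[e [e_gt0 eU]].
  by exists e.
have [c Xc [cb2 cb1]] := approx S eps e eps_gt0 (fun P => (eP P).1).
have [N SN] := primeT_seq_ub S.
have c_adele : is_adele c.
  by exists N => P NP; have := cb1 P; case: ifPn => // /SN; rewrite ltnNge NP.
have c_basic : adele_basic S Uinf Up c.
  split=> [|P]; first exact: epsU.
  by have := cb1 P; case: ifPn => // PS /(eP P).2; apply.
by exists c; split=> //; split=> //; apply: basicU.
Qed.

Lemma adele_invertible_units a :
  a.2 != 0 -> (forall P, a.1 P != 0) ->
  (exists N : nat, forall P, (N <= val P)%N -> ab P (a.1 P) = 1) -> adele_invertible a.
Proof.
move=> a2 a1 [N aN]; exists ((fun P => (a.1 P)^-1), a.2^-1).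
split; last by split=> [P|]; rewrite divff.
by exists N => P /aN; rewrite pf_absV => ->; rewrite invr1.
Qed.

(* [D = 1] if [a_oo = 0]; otherwise a power of a prime [P] with [a_P = 0], or a
   large prime [P] with [|a_P| < 1], which exists since [a] is not invertible. *)
Lemma noninvertible_denominator a : is_adele a -> ~ adele_invertible a ->
  forall N B : nat, exists D : nat, [/\ (0 < D)%N, a.2 != 0 -> (B <= D)%N &
    forall P, (val P %| D)%N ->
      (a.1 P = 0 \/ (N <= val P)%N) /\ ab P (a.1 P) <= padic_abs (val P) D%:R].
Proof.
move=> [Na aNa] a_ninv N B.
have [_|a2] := eqVneq a.2 0.
  by exists 1%N; split=> // P; rewrite dvdn1 gtn_eqF ?primeT_gt1.
have [[P aP]|a_nz] := pselect (exists P, a.1 P = 0).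
  exists (val P ^ B)%N; split=> [||Q].
  - by rewrite expn_gt0 prime_gt0 ?(valP P).
  - by move=> _; apply/ltnW/ltn_expl/primeT_gt1.
  rewrite Euclid_dvdX ?(valP Q) // dvdn_primeT => /andP[/eqP-> _].
  by rewrite aP (pf_abs0 (Qp P)) padic_abs_ge0; split; first left.
have [P [NBP aP]] : exists P, (maxn N B <= val P)%N /\ ab P (a.1 P) < 1.
  apply: contrapT => noP; apply: a_ninv; apply: adele_invertible_units => // [P|].
    by apply/eqP => aP; apply: a_nz; exists P.
  exists (maxn (maxn N B) Na) => P; rewrite !geq_max => /andP[NBP NaP].
  apply/eqP; rewrite eq_le aNa // leNgt; apply/negP => aP; apply: noP.
  by exists P; rewrite geq_max.
rewrite geq_max in NBP; case/andP: NBP => NP BP.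
exists (val P); split=> [||Q]; first exact/prime_gt0/(valP P).
  by [].
rewrite dvdn_primeT => /eqP->.
by split; [right | rewrite padic_abs_prime ?(valP P) // pf_abs_lt1 ?(valP P)].
Qed.

Lemma pf_dense_quotient (x y : forall P, pf_car (Qp P)) (e : primeT -> rat) :
  (forall P, 0 < e P) ->
  exists t : primeT -> rat, forall P, x P != 0 ->
    ab P (y P / x P - emb P (t P)) < e P / ab P (x P).
Proof.
move=> e_gt0; suff /choice[t tP] : forall P, exists t : rat,
    x P != 0 -> ab P (y P / x P - emb P t) < e P / ab P (x P) by exists t.
move=> P.
have [_|xP] := eqVneq (x P) 0; first by exists 0.
by have [t ?] := pf_dense (y P / x P) (divr_gt0 (e_gt0 P) (pf_abs_gt0 xP)); exists t.
Qed.

Lemma orbit_approx_finite a b : is_adele a -> ~ adele_invertible a ->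
  (forall P, a.1 P = 0 -> b.1 P = 0) ->
  forall S (e : primeT -> rat), (forall P, 0 < e P) ->
  exists M : nat, (0 < M)%N /\ forall B : nat, exists (z0 : int) (D : nat),
    [/\ (0 < D)%N, a.2 != 0 -> (B <= D)%N & forall k : int,
      finite_near S e b (adele_qmul ((z0 + M%:Z * k)%:~R / D%:R) a)].
Proof.
move=> [Na aNa] a_ninv b1_0 S e e_gt0.
have [NS SNS] := primeT_seq_ub S; set N0 := maxn Na NS.
set L := [seq P <- primes_below N0 | a.1 P != 0].
have uL : uniq L by rewrite filter_uniq ?uniq_primes_below.
have memL P : (P \in L) = (a.1 P != 0) && (val P < N0)%N.
  by rewrite mem_filter mem_primes_below.
pose b' P := if P \in S then b.1 P else 0.
pose e' P := if P \in S then e P else 1.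
have e'_gt0 P : 0 < e' P by rewrite /e'; case: ifP.
have [t tP] := pf_dense_quotient a.1 b' e'_gt0.
have d_gt0 Q : Q \in L -> 0 < e' Q / ab Q (a.1 Q).
  by rewrite memL => /andP[aQ _]; rewrite divr_gt0 ?pf_abs_gt0.
have [E [M [E_gt0 M_gt0 approx]]] := rat_approx_seq Qp t uL d_gt0.
exists M; split=> // B.
have [D [D_gt0 BD DP]] := noninvertible_denominator (ex_intro _ Na aNa) a_ninv N0 B.
have LD Q : Q \in L -> ~~ (val Q %| D)%N.
  rewrite memL => /andP[aQ QN0]; apply/negP => /DP[[/eqP|]]; first by rewrite (negbTE aQ).
  by rewrite leqNgt QN0.
have [z0 z0P] := approx D D_gt0 LD.
exists z0, (E * D)%N; split=> [||k P]; first by rewrite muln_gt0 E_gt0.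
  by move=> /BD /leq_trans; apply; rewrite leq_pmull.
have [approxL approxNL] := z0P k; set q := _ / _ in approxL approxNL *; rewrite /=.
have [PL|PNL] := boolP (P \in L).
  have aP : a.1 P != 0 by move: PL; rewrite memL => /andP[].
  have := pf_abs_mul_approx aP (tP P aP) (approxL P PL).
  by rewrite /b' /e'; case: ifP => // _; rewrite subr0 => /ltW.
have [aP|aP] := eqVneq (a.1 P) 0.
  rewrite aP mulr0 (pf_abs0 (Qp P)) ler01; case: ifP => // PS.
  by rewrite b1_0 // subr0 (pf_abs0 (Qp P)) e_gt0.
have N0P : (N0 <= val P)%N by move: PNL; rewrite memL aP /= -leqNgt.
have -> : (P \in S) = false.
  by apply: contraTF N0P => /SNS PNS; rewrite -ltnNge (leq_trans PNS) ?leq_maxr.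
apply: pf_abs_mul_le1 (approxNL P PNL) _.
have [/DP[_ //]|PD] := boolP (val P %| D)%N.
rewrite padic_abs_nat_coprime ?(valP P) //; apply: aNa.
exact: leq_trans (leq_maxl _ _) N0P.
Qed.

Lemma orbit_approx a b : is_adele a -> ~ adele_invertible a ->
  (forall P, a.1 P = 0 -> b.1 P = 0) -> (a.2 = 0 -> b.2 = 0) ->
  forall S (eps : R) (e : primeT -> rat), 0 < eps -> (forall P, 0 < e P) ->
  exists2 c, Qstar_orbit a c & `|b.2 - c.2| < eps /\ finite_near S e b c.
Proof.
move=> a_adele a_ninv b1_0 b2_0 S eps e eps_gt0 e_gt0.
have [M [M_gt0 approx]] := orbit_approx_finite a_adele a_ninv b1_0 S e_gt0.
have [z0 [D [D_gt0 BD near]]] := approx (Num.bound (M%:R * `|a.2| / eps)).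
have [k [z_neq0 zk]] := arith_prog_approx z0 (b.2 / a.2) M_gt0 D_gt0.
set q := (z0 + M%:Z * k)%:~R / D%:R : rat.
have q_neq0 : q != 0 by rewrite mulf_neq0 ?intr_eq0 ?invr_eq0 ?pnatr_eq0 -?lt0n.
exists (adele_qmul q a); first by exists q.
split; last exact: near.
rewrite /=; have [a2_0|a2] := eqVneq a.2 0; first by rewrite a2_0 mulr0 b2_0 // subr0 normr0.
have -> : b.2 - ratr q * a.2 = - ((ratr q - b.2 / a.2) * a.2) by rewrite mulrBl divfK // opprB.
rewrite normrN normrM; apply: le_lt_trans (ler_wpM2r (normr_ge0 _) zk) _.
have MD : M%:R * `|a.2| / eps < D%:R.
  apply: lt_le_trans (archi_boundP _) _.
    exact: divr_ge0 (mulr_ge0 (ler0n _ _) (normr_ge0 _)) (ltW eps_gt0).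
  by rewrite ler_nat BD.
by rewrite mulrAC ltr_pdivrMr ?ltr0n // [eps * _]mulrC -ltr_pdivrMr.
Qed.

End Adeles.

Theorem lemma3p2 (Qp : forall P : primeT, padic_field (val P)) (R : realType)
  (a : adele_t Qp R) :
  is_adele a -> ~ adele_invertible a ->
  forall b : adele_t Qp R,
    adele_closure (Qstar_orbit a) b <->
    (is_adele b /\
     (forall P : primeT, a.1 P = 0 -> b.1 P = 0) /\
     (a.2 = 0 -> b.2 = 0)).
Proof.
move=> a_adele a_ninv b; split=> [clb|[b_adele [b1_0 b2_0]]].
  split; first by case: clb.
  split=> [P aP|a2]; [apply: adele_closure_finite_eq0 clb|apply: adele_closure_real_eq0 clb].
    by move=> _ [q [_ ->]]; rewrite /= aP mulr0.
  by move=> _ [q [_ ->]]; rewrite /= a2 mulr0.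
apply: adele_closure_approx => // S eps e eps_gt0 e_gt0.
exact: orbit_approx.
Qed.
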